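(* Let $\mathbf{L}=\{\mathbf{b}_1,\dots,\mathbf{b}_r\}+\mathbb{N}(\mathbf{F})\subseteq\mathbb{N}^n$ with $\mathbf{F}$ finite, such that $(\mathbf{b}_i+\mathbb{N}(\mathbf{F}))\cap(\mathbf{b}_j+\mathbb{N}(\mathbf{F}))\neq\emptyset$ for all $i,j$ (so $\mathbf{L}$ is directed hybridlinear), and let $\mathbf{x}\in\mathbf{L}$. Then $\dim\big(\mathbf{L}\setminus(\mathbf{x}+\mathbb{N}(\mathbf{F}))\big)<\dim(\mathbf{L})$.
   Context: $\mathbb{N}(\mathbf{F})$: finite $\mathbb{N}$-linear combinations of $\mathbf{F}$. Dimension of $\mathbf{X}\subseteq\mathbb{Q}^n$: the least $k\in\mathbb{N}$ such that $\mathbf{X}\subseteq\bigcup_{i=1}^r(\mathbf{c}_i+\mathbf{V}_i)$ for finitely many $\mathbf{c}_i\in\mathbb{Q}^n$ and vector subspaces $\mathbf{V}_i$ of dimension $\le k$. *)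

From HB Require Import structures.
From mathcomp Require Import all_boot all_order all_algebra.
Set Implicit Arguments. Unset Strict Implicit. Unset Printing Implicit Defensive.
Import Order.TTheory GRing.Theory Num.Theory.
Local Open Scope ring_scope.

Definition toQ (n : nat) (v : 'rV[nat]_n) : 'rV[rat]_n := map_mx (fun k : nat => k%:R) v.

Definition Ncomb (n : nat) (F : seq 'rV[nat]_n) (v : 'rV[nat]_n) : Prop :=
  exists lam : 'I_(size F) -> nat, v = \sum_(i < size F) (F`_i *+ lam i).

Definition hlin (n : nat) (B F : seq 'rV[nat]_n) (v : 'rV[nat]_n) : Prop :=
  exists2 b, b \in B & exists2 u, Ncomb F u & v = b + u.

Definition directed (n : nat) (B F : seq 'rV[nat]_n) : Prop :=
  forall bi bj, bi \in B -> bj \in B ->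
    exists v, (exists2 u, Ncomb F u & v = bi + u) /\ (exists2 u, Ncomb F u & v = bj + u).

Definition coverable (n : nat) (X : 'rV[rat]_n -> Prop) (k : nat) : Prop :=
  exists s : seq ('rV[rat]_n * {vspace 'rV[rat]_n}),
    (forall p, p \in s -> (\dim p.2 <= k)%N) /\
    (forall x, X x -> exists2 p, p \in s & x - p.1 \in p.2).

Definition is_dim (n : nat) (X : 'rV[rat]_n -> Prop) (d : nat) : Prop :=
  coverable X d /\ forall k, coverable X k -> (d <= k)%N.

From HB Require Import structures.
From mathcomp Require Import all_boot all_order all_algebra.
From mathcomp Require Import ring.
From Stdlib Require Import Classical Wf_nat.
Import Order.TTheory GRing.Theory Num.Theory.
Set Implicit Arguments. Unset Strict Implicit.
Local Open Scope ring_scope.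

(* Let m be the dimension of the rational span of F.  L is covered by the translates
   b_i + span F, and it cannot be covered by affine subspaces of dimension < m, because
   each of them meets the moment curve t |-> b_1 + sum_i t^(i+1) F_i (which lies in L)
   only at the roots of a nonzero polynomial.  On the other hand, for every e in N(F) the
   set N(F) \ (e + N(F)) is a finite union of translates of sets of dimension < m: by
   induction on e this reduces to e = f a generator, and then N(F) \ (f + N(F)) lies in
   N(G), G = F without f; either f is outside span G, so N(G) has dimension < m, or some
   d f + a = b with a, b in N(G), and then it lies in N(G) \ (b + N(G)), with G shorter
   than F.  Directedness turns L \ (x + N(F)) into finitely many translates of such sets. *)

Section Cone.
Variable n : nat.
Implicit Types (F G : seq 'rV[nat]_n) (u v w : 'rV[nat]_n).

Inductive cone F : 'rV[nat]_n -> Prop :=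
| cone0 : cone F 0
| coneDgen v f : cone F v -> f \in F -> cone F (v + f).

Lemma coneD F u v : cone F u -> cone F v -> cone F (u + v).
Proof.
move=> hu; elim=> [|v' f _ IH hf]; first by rewrite addr0.
by rewrite addrA; apply: coneDgen.
Qed.

Lemma cone_gen F f : f \in F -> cone F f.
Proof. by move=> hf; rewrite -[f]add0r; apply: coneDgen => //; apply: cone0. Qed.

Lemma coneMn F v k : cone F v -> cone F (v *+ k).
Proof.
move=> hv; elim: k => [|k IH]; first by rewrite mulr0n; apply: cone0.
by rewrite mulrS; apply: coneD.
Qed.

Lemma cone_sub F G v : {subset F <= G} -> cone F v -> cone G v.
Proof. by move=> sFG; elim=> [|v' f _ IH /sFG]; [apply: cone0 | apply: coneDgen]. Qed.

Lemma Ncomb_add F u v : Ncomb F u -> Ncomb F v -> Ncomb F (u + v).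
Proof.
case=> l1 -> [l2 ->]; exists (fun i => (l1 i + l2 i)%N).
by rewrite -big_split /=; apply: eq_bigr => i _; rewrite mulrnDr.
Qed.

Lemma Ncomb_gen F f : f \in F -> Ncomb F f.
Proof.
move=> hf; have hi : (index f F < size F)%N by rewrite index_mem.
exists (fun i : 'I_(size F) => (i == Ordinal hi) : nat).
rewrite (bigD1 (Ordinal hi)) //= eqxx mulr1n nth_index // big1 ?addr0 //.
by move=> i /negbTE ->; rewrite mulr0n.
Qed.

Lemma NcombP F v : Ncomb F v <-> cone F v.
Proof.
split.
  case=> lam ->; apply: (big_ind (cone F)); [exact: cone0 | exact: coneD |].
  by move=> i _; apply/coneMn/cone_gen/mem_nth.
elim=> [|v' f _ IH hf]; last by apply: Ncomb_add => //; apply: Ncomb_gen.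
by exists (fun _ => 0%N); rewrite big1 // => i _; rewrite mulr0n.
Qed.

Lemma toQ0 : toQ 0 = 0 :> 'rV[rat]_n.
Proof. exact: map_mx0. Qed.

Lemma toQD u v : toQ (u + v) = toQ u + toQ v.
Proof. exact: map_mxD. Qed.

Lemma toQMn u k : toQ (u *+ k) = toQ u *+ k.
Proof. exact: raddfMn. Qed.

Lemma toQ_sum I (r : seq I) (P : pred I) (E : I -> 'rV[nat]_n) :
  toQ (\sum_(i <- r | P i) E i) = \sum_(i <- r | P i) toQ (E i).
Proof. exact: raddf_sum. Qed.

Lemma toQ_inj : injective (@toQ n).
Proof.
move=> u v /matrixP h; apply/matrixP => i j.
by move: (h i j); rewrite !mxE => /eqP; rewrite eqr_nat => /eqP.
Qed.

Definition qspan F := <<map (@toQ n) F>>%VS.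

Definition qdim F := \dim (qspan F).

Lemma cone_qspan F v : cone F v -> toQ v \in qspan F.
Proof.
elim=> [|v' f _ IH hf]; first by rewrite toQ0 mem0v.
by rewrite toQD memvD // memv_span // map_f.
Qed.

Lemma rat_mulnat_diff (c : rat) :
  exists D P Q : nat, (0 < D)%N /\ c * D%:R = P%:R - Q%:R.
Proof.
exists `|denq c|%N; rewrite absz_gt0 denq_neq0 pmulrn gez0_abs ?denq_ge0 //.
rewrite -numqE; case: (numq c) => [P|Q]; first by exists P, 0%N; rewrite subr0.
by exists 0%N, Q.+1; rewrite NegzE sub0r.
Qed.

Lemma qspan_cone_relation F y : y \in qspan F ->
  exists2 d, (0 < d)%N & exists a b, [/\ cone F a, cone F b & y *+ d + toQ a = toQ b].
Proof.
elim: F y => [|g F IH] y.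
  rewrite /qspan span_nil memv0 => /eqP ->.
  by exists 1%N => //; exists 0, 0; rewrite mul0rn add0r; split=> //; apply: cone0.
rewrite /qspan /= span_cons => /memv_addP [_ /vlineP [c ->] [z /IH [d hd [a [b [ha hb ez]]]] ->]].
have [D [P [Q [hD hc]]]] := rat_mulnat_diff c.
have sub_cons : {subset F <= g :: F} by move=> f hf; rewrite inE hf orbT.
have hg : cone (g :: F) g by apply/cone_gen/mem_head.
exists (d * D)%N; first by rewrite muln_gt0 hd.
exists (g *+ (Q * d) + a *+ D), (g *+ (P * d) + b *+ D); split.
- by apply: coneD; apply: coneMn => //; apply: cone_sub ha.
- by apply: coneD; apply: coneMn => //; apply: cone_sub hb.
rewrite !toQD !toQMn -ez !mulrnA -!scaler_nat.
have -> : P%:R = c * D%:R + Q%:R by rewrite hc subrK.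
by apply/rowP => j; rewrite !mxE; ring.
Qed.

End Cone.

Section CoveredBelow.
Variable n : nat.

Definition covered_below (P : 'rV[nat]_n -> Prop) (k : nat) :=
  exists s : seq ('rV[rat]_n * {vspace 'rV[rat]_n}),
    (forall p, p \in s -> (\dim p.2 < k)%N) /\
    (forall w, P w -> exists2 p, p \in s & toQ w - p.1 \in p.2).

Lemma covered_below_sub (P Q : 'rV[nat]_n -> Prop) k :
  (forall w, P w -> Q w) -> covered_below Q k -> covered_below P k.
Proof. by move=> sPQ [s [hdim hcov]]; exists s; split=> // w /sPQ /hcov. Qed.

Lemma covered_belowU (P Q : 'rV[nat]_n -> Prop) k :
  covered_below P k -> covered_below Q k -> covered_below (fun w => P w \/ Q w) k.
Proof.
move=> [s [hs covP]] [t [ht covQ]]; exists (s ++ t); split.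
  by move=> p; rewrite mem_cat => /orP [/hs | /ht].
by move=> w [/covP | /covQ] [p hp hw]; exists p; rewrite // mem_cat hp ?orbT.
Qed.

Lemma covered_below_bigcup (I : eqType) (r : seq I) (P : I -> 'rV[nat]_n -> Prop) k :
  (forall i, i \in r -> covered_below (P i) k) ->
  covered_below (fun w => exists2 i, i \in r & P i w) k.
Proof.
elim: r => [|i r IH] hr; first by exists [::]; split=> // w [].
apply: (@covered_below_sub _ (fun w => P i w \/ exists2 j, j \in r & P j w)).
  by move=> w [j]; rewrite inE => /orP [/eqP -> | hj hw]; [left | right; exists j].
apply: covered_belowU; first by apply/hr/mem_head.
by apply: IH => j hj; apply: hr; rewrite inE hj orbT.
Qed.

Lemma covered_below_translate (P : 'rV[nat]_n -> Prop) k a :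
  covered_below P k -> covered_below (fun w => exists2 w', P w' & w = a + w') k.
Proof.
move=> [s [hs hcov]]; exists [seq (toQ a + p.1, p.2) | p <- s]; split.
  by move=> q /mapP [p hp ->] /=; apply: hs.
move=> _ [w /hcov [p hp hw] ->]; exists (toQ a + p.1, p.2); first exact: map_f.
by rewrite /= toQD opprD addrACA subrr add0r.
Qed.

End CoveredBelow.

Section ConeDiff.
Variable n : nat.
Implicit Types (F G : seq 'rV[nat]_n) (u v w : 'rV[nat]_n).

Definition cone_diff F e w := cone F w /\ ~ (exists2 t, cone F t & w = e + t).

Lemma cone_diff_gen F f w : cone_diff F f w -> cone [seq g <- F | g != f] w.
Proof.
move=> [hw]; elim: hw => [|v g hv IH hg] hn; first exact: cone0.
case: (eqVneq g f) => [eq_gf | ne_gf].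
  by case: hn; exists v; rewrite // eq_gf addrC.
apply: coneDgen; last by rewrite mem_filter ne_gf.
apply: IH => -[t ht ev]; apply: hn; exists (t + g); first exact: coneDgen.
by rewrite ev addrA.
Qed.

Lemma size_filter_neq F f : f \in F -> (size [seq g <- F | g != f] < size F)%N.
Proof.
move=> hf; rewrite size_filter -[X in (_ < X)%N](count_predC (predC1 f)) -addn1 leq_add2l.
by rewrite -has_count; apply/hasP; exists f => //=; rewrite negbK.
Qed.

Lemma qspan_filter F (p : pred 'rV[nat]_n) : (qspan (filter p F) <= qspan F)%VS.
Proof. by apply: sub_span => _ /mapP [g /[!mem_filter] /andP [_ hg] ->]; rewrite map_f. Qed.

Lemma qspan_filter_neq F f :
  toQ f \in qspan [seq g <- F | g != f] -> qspan [seq g <- F | g != f] = qspan F.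
Proof.
move=> hf; apply/eqP; rewrite eqEsubv qspan_filter; apply/span_subvP => _ /mapP [g hg ->].
by case: (eqVneq g f) => [-> //| ne]; rewrite memv_span // map_f // mem_filter ne.
Qed.

Section ConeDiffInduction.
Variable F : seq 'rV[nat]_n.
Hypothesis IH : forall G, (size G < size F)%N ->
  forall e, cone G e -> covered_below (cone_diff G e) (qdim G).

Lemma cone_diff_gen_covered f : f \in F -> covered_below (cone_diff F f) (qdim F).
Proof.
move=> hf; set G := [seq g <- F | g != f].
have ltG : (size G < size F)%N by apply: size_filter_neq.
have sub_GF : {subset G <= F} by move=> g; rewrite mem_filter => /andP [].
case: (boolP (toQ f \in qspan G)) => [fG | nfG].
- have [d d_gt0 [a [b [ha hb rel]]]] := qspan_cone_relation fG.
  rewrite /qdim -(qspan_filter_neq fG); apply: (covered_below_sub _ (IH ltG hb)).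
  move=> w hw; split; first exact: cone_diff_gen.
  case=> t ht ewt; case: hw => _; apply.
  have eb : b = f *+ d + a by apply: toQ_inj; rewrite toQD toQMn -rel.
  exists (f *+ d.-1 + a + t); last by rewrite ewt eb -(prednK d_gt0) mulrS !addrA.
  by apply: coneD; [apply: coneD; [apply/coneMn/cone_gen | apply: cone_sub ha] |
    apply: cone_sub ht].
- exists [:: (0, qspan G)]; split.
    move=> _ /[1!inE] /eqP -> /=; rewrite /qdim (ltn_leqif (dimv_leqif_eq (qspan_filter _ _))).
    by apply: contra nfG => /eqP ->; rewrite memv_span // map_f.
  move=> w /cone_diff_gen hw; exists (0, qspan G); first exact: mem_head.
  by rewrite subr0; apply: cone_qspan.
Qed.

Lemma cone_diff_covered_step e : cone F e -> covered_below (cone_diff F e) (qdim F).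
Proof.
elim=> [|v f _ IHv hf].
  by exists [::]; split=> // w [hw []]; exists w; rewrite ?add0r.
apply: (@covered_below_sub _ _ (fun w => cone_diff F v w \/
  exists2 w', cone_diff F f w' & w = v + w')).
  move=> w [hw hn]; case: (classic (exists2 t, cone F t & w = v + t)) => [[t ht ewt] | ?].
    right; exists t => //; split=> // -[t' ht' ett'].
    by apply: hn; exists t'; rewrite // ewt ett' addrA.
  by left.
by apply: covered_belowU => //; apply/covered_below_translate/cone_diff_gen_covered.
Qed.

End ConeDiffInduction.

Lemma cone_diff_covered F e : cone F e -> covered_below (cone_diff F e) (qdim F).
Proof.
elim: {F}(size F).+1 {-2}F (ltnSn (size F)) e => // N IHN F ltFN.
by apply: cone_diff_covered_step => G ltG; apply: IHN; apply: leq_trans ltG ltFN.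
Qed.

End ConeDiff.

Section MomentCurve.
Variable n : nat.
Implicit Types (F : seq 'rV[nat]_n).

Definition moment F (t : nat) : 'rV[nat]_n := \sum_(i < size F) F`_i *+ t ^ i.+1.

Lemma cone_moment F t : cone F (moment F t).
Proof. by apply/NcombP; exists (fun i => t ^ i.+1)%N. Qed.

(* The coordinate l of the component of z outside V is a linear form vanishing on V and
   nonzero on some generator; along the moment curve it is a nonzero polynomial in t. *)
Lemma moment_avoids_subspace F b c (V : {vspace 'rV[rat]_n}) :
  ~~ (qspan F <= V)%VS -> exists2 P : {poly rat}, P != 0 &
    forall t : nat, ~~ root P t%:R -> toQ (b + moment F t) - c \notin V.
Proof.
move=> FV; have [i FiV] : exists i : 'I_(size F), toQ F`_i \notin V.
  apply/existsP; apply: contraR FV => /existsPn FV; apply/span_subvP => _ /mapP [g hg ->].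
  have ig : (index g F < size F)%N by rewrite index_mem.
  by have := FV (Ordinal ig); rewrite negbK /= nth_index.
pose r z := z - projv V z.
have rD y z : r (y + z) = r y + r z by rewrite /r linearD opprD addrACA.
have rZ (a : rat) z : r (a *: z) = a *: r z by rewrite /r linearZ scalerBr.
have rV z : z \in V -> r z = 0 by move=> zV; rewrite /r projv_id ?subrr.
have [l rFi] : exists l, r (toQ F`_i) 0 l != 0.
  apply/existsP; apply: contraR FiV => /existsPn r0.
  have : r (toQ F`_i) = 0 by apply/rowP => l; rewrite [RHS]mxE; apply/eqP; rewrite -[_ == _]negbK r0.
  by move/eqP; rewrite subr_eq0 => /eqP ->; apply: memv_proj.
have r_sum (s : seq 'I_(size F)) (E : 'I_(size F) -> 'rV[rat]_n) :
    r (\sum_(k <- s) E k) = \sum_(k <- s) r (E k).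
  by apply: (big_morph r rD); rewrite /r linear0 subr0.
set P := \poly_(k < (size F).+1) r (if k is k'.+1 then toQ F`_k' else toQ b - c) 0 l.
exists P.
  apply: contraNneq rFi => /(congr1 (fun p : {poly rat} => p`_i.+1)).
  by rewrite coef_poly coef0 ltnS ltn_ord => ->.
move=> t; apply: contra => /rV r0; rewrite /root.
suff -> : P.[t%:R] = r (toQ (b + moment F t) - c) 0 l by rewrite r0 mxE.
rewrite /moment toQD toQ_sum addrAC rD r_sum mxE summxE.
rewrite horner_poly big_ord_recl /= expr0 mulr1; congr (_ + _).
by apply: eq_bigr => k _; rewrite toQMn -scaler_nat rZ natrX !mxE mulrC.
Qed.

Lemma moment_avoids_subspaces F b (s : seq ('rV[rat]_n * {vspace 'rV[rat]_n})) :
  (forall p, p \in s -> ~~ (qspan F <= p.2)%VS) -> exists2 P : {poly rat}, P != 0 &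
    forall t : nat, ~~ root P t%:R -> forall p, p \in s -> toQ (b + moment F t) - p.1 \notin p.2.
Proof.
elim: s => [|p s IH] hs; first by exists 1; rewrite ?oner_neq0.
have [q qs|P P0 avoidP] := IH; first by apply: hs; rewrite inE qs orbT.
have [Q Q0 avoidQ] := moment_avoids_subspace b p.1 (hs p (mem_head p s)).
exists (Q * P) => [|t]; first exact: mulf_neq0.
rewrite rootM negb_or => /andP [Qt Pt] q /[1!inE] /orP [/eqP -> | qs]; first exact: avoidQ.
exact: avoidP.
Qed.

Lemma poly_nat_nonroot (P : {poly rat}) : P != 0 -> exists t : nat, ~~ root P t%:R.
Proof.
move=> P0; case: (boolP (has (fun t : nat => ~~ root P t%:R) (iota 0 (size P)))).
  by case/hasP=> t _; exists t.
move/hasPn=> roots; suff : (size P < size P)%N by rewrite ltnn.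
rewrite -[X in (X < _)%N](size_iota 0) -(size_map (fun t : nat => t%:R : rat)).
apply: max_poly_roots P0 _ _; first by apply/allP => _ /mapP [t /roots /negPn Pt ->].
by rewrite map_inj_uniq ?iota_uniq // => t u /eqP; rewrite eqr_nat => /eqP.
Qed.

Lemma cone_cover_dim_ge F b (s : seq ('rV[rat]_n * {vspace 'rV[rat]_n})) :
  (forall u, cone F u -> exists2 p, p \in s & toQ (b + u) - p.1 \in p.2) ->
  exists2 p, p \in s & (qdim F <= \dim p.2)%N.
Proof.
move=> cover; case: (boolP (has (fun p => qdim F <= \dim p.2)%N s)) => [/hasP // | /hasPn low].
have [P P0 avoid] := moment_avoids_subspaces b (fun p ps => contra (@dimvS _ _ _ _) (low p ps)).
have [t Pt] := poly_nat_nonroot P0.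
have [p ps p_cov] := cover _ (cone_moment F t).
by have := avoid t Pt p ps; rewrite p_cov.
Qed.

End MomentCurve.

Lemma is_dim_exists n (X : 'rV[rat]_n -> Prop) k : coverable X k -> exists d, is_dim X d.
Proof.
move=> covk; have [d [[covd d_min] _]] := dec_inh_nat_subset_has_unique_least_element
  (coverable X) (fun j => classic _) (ex_intro _ k covk).
by exists d; split=> // j /d_min /ssrnat.leP.
Qed.

Section CoveredBelow.
Variables (n : nat) (P : 'rV[nat]_n -> Prop) (k : nat).
Hypothesis covP : covered_below P k.

Lemma covered_below_gt0 w : P w -> (0 < k)%N.
Proof.
move=> Pw; case: covP => s [hs hcov]; have [p /hs dim_lt _] := hcov w Pw.
exact: leq_ltn_trans dim_lt.
Qed.

Lemma covered_below_coverable : coverable (fun q => exists2 v, P v & q = toQ v) k.-1.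
Proof.
case: covP => s [hs hcov]; exists s; split; last by move=> _ [v /hcov hv ->].
by move=> p /hs; case: (k).
Qed.

End CoveredBelow.

Section Hybridlinear.
Variables (n : nat) (B F : seq 'rV[nat]_n) (x : 'rV[nat]_n).

Lemma hlinP v : hlin B F v <-> exists2 b, b \in B & exists2 u, cone F u & v = b + u.
Proof.
by split=> -[b hb [u hu ev]]; exists b => //; exists u => //; apply/NcombP.
Qed.

Lemma hlin_coverable : coverable (fun q => exists2 v, hlin B F v & q = toQ v) (qdim F).
Proof.
exists [seq (toQ b, qspan F) | b <- B]; split; first by move=> _ /mapP [b _ ->].
move=> _ [_ /hlinP [b hb [u hu ->]] ->]; exists (toQ b, qspan F); first exact: map_f.
by rewrite /= toQD addrC addKr cone_qspan.
Qed.

Lemma hlin_dim_ge k b0 : b0 \in B ->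
  coverable (fun q => exists2 v, hlin B F v & q = toQ v) k -> (qdim F <= k)%N.
Proof.
move=> hb0 [s [hs hcov]].
have [u hu|p ps] := cone_cover_dim_ge (b := b0) (s := s) (F := F).
  by apply: hcov; exists (b0 + u) => //; apply/hlinP; exists b0 => //; exists u.
by move=> /leq_trans; apply; apply: hs.
Qed.

Hypotheses (dirBF : directed B F) (hx : hlin B F x).

Lemma directed_diff_cone_diff b : b \in B -> exists2 e, cone F e &
  forall u, cone F u -> ~ (exists2 t, Ncomb F t & b + u = x + t) -> cone_diff F e u.
Proof.
move=> hb; have [b0 hb0 [u0 /NcombP hu0 ex]] := hx.
have [_ [[u1 /NcombP hu1 ->] [u2 /NcombP hu2 e12]]] := dirBF hb hb0.
exists (u1 + u0); first exact: coneD.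
move=> u hu hn; split=> // -[t ht eu]; apply: hn; exists (u2 + t).
  by apply/NcombP/coneD.
by rewrite eu ex addrA addrA e12 -!addrA (addrCA u2).
Qed.

Lemma hlin_diff_covered_below :
  covered_below (fun v => hlin B F v /\ ~ (exists2 u, Ncomb F u & v = x + u)) (qdim F).
Proof.
pose Pb b v := exists2 u, cone F u & v = b + u /\ ~ (exists2 t, Ncomb F t & v = x + t).
apply: (@covered_below_sub _ _ (fun v => exists2 b, b \in B & Pb b v)).
  by move=> v [/hlinP [b hb [u hu ev]] hn]; exists b => //; exists u.
apply: covered_below_bigcup => b /directed_diff_cone_diff [e he shift].
apply: (covered_below_sub _ (covered_below_translate b (cone_diff_covered he))).
by move=> _ [u hu [-> hn]]; exists u => //; apply: shift.
Qed.

End Hybridlinear.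

Theorem mainTheorem17 (n : nat) (B F : seq 'rV[nat]_n) (x : 'rV[nat]_n) :
  directed B F -> hlin B F x ->
  let L := fun q : 'rV[rat]_n => exists2 v, hlin B F v & q = toQ v in
  let D := fun q : 'rV[rat]_n =>
    exists2 v, (hlin B F v /\ ~ (exists2 u, Ncomb F u & v = x + u)) & q = toQ v in
  (forall q, ~ D q) \/
  (exists d dL : nat, is_dim D d /\ is_dim L dL /\ (d < dL)%N).
Proof.
move=> dirBF hx L D; have [b0 hb0 _] := hx.
case: (classic (exists q, D q)) => [[_ [v Dv _]] | noD]; last first.
  by left=> q Dq; apply: noD; exists q.
right; have covD := hlin_diff_covered_below dirBF hx.
have [d [covd d_min]] := is_dim_exists (covered_below_coverable covD).
have [dL [covdL dL_min]] := is_dim_exists (hlin_coverable B F).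
exists d, dL; do 2!split=> //.
have -> : dL = qdim F.
  by apply/eqP; rewrite eqn_leq (dL_min _ (hlin_coverable B F)) (hlin_dim_ge hb0 covdL).
apply: leq_ltn_trans (d_min _ (covered_below_coverable covD)) _.
by rewrite prednK // (covered_below_gt0 covD Dv).
Qed.
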